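(* There is a constant $c$ such that for every $n\in\mathbb{N}_{\ge1}$ there exists a language $L_n$ recognized by a deterministic weak Muller automaton $\mathfrak{A}_n$ with explicitly represented acceptance family, of size at most $c\cdot n$, such that Player $O$ wins $\Gamma_f(L_n)$ for some constant delay function $f$, but Player $I$ wins $\Gamma_g(L_n)$ for every delay function $g$ with $g(0)\le 2^n$.
   Context: An $\omega$-automaton $\mathfrak{A}=(Q,\Sigma,q_I,\Delta,\mathrm{Acc})$ has finite state set $Q$, alphabet $\Sigma$, initial state $q_I$, transitions $\Delta\subseteq Q\times\Sigma\times Q$, accepting runs $\mathrm{Acc}\subseteq\Delta^\omega$; $L(\mathfrak{A})$ is the set of words processed by an initial accepting run. Deterministic means $\Delta$ is a total function $Q\times\Sigma\to Q$. A weak Muller automaton has $\mathcal{F}\subseteq 2^Q$ and accepts runs whose set of visited states lies in $\mathcal{F}$. With explicit representation ($\mathcal{F}$ listed element by element), its size is $|Q|+|\mathcal{F}|$. A delay function is $f:\mathbb{N}\to\mathbb{N}_{\ge1}$; it is constant if $f(i)=1$ for all $i>0$. In the delay game $\Gamma_f(L)$, $L\subseteq(\Sigma_I\times\Sigma_O)^\omega$, in round $i=0,1,\dots$ Player $I$ picks $u_i\in\Sigma_I^{f(i)}$ and then Player $O$ picks $v_i\in\Sigma_O$; $O$ wins the play iff $\binom{u_0u_1\cdots}{v_0v_1\cdots}\in L$. Strategies: $\tau_I:\Sigma_O^*\to\Sigma_I^*$ with $|\tau_I(w)|=f(|w|)$, $\tau_O:\Sigma_I^+\to\Sigma_O$;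 a player wins the game if she/he has a strategy winning all consistent plays. *)

From mathcomp Require Import all_boot.
Set Implicit Arguments. Unset Strict Implicit. Unset Printing Implicit Defensive.

Definition word (A : Type) := nat -> A.
Definition language (A : Type) := word A -> Prop.

Record DWMA (A : Type) := MkDWMA {
  dw_state : finType;
  dw_init : dw_state;
  dw_trans : dw_state -> A -> dw_state;
  dw_acc : {set {set dw_state}}
}.

Fixpoint dw_run A (M : DWMA A) (w : word A) (n : nat) : dw_state M :=
  match n with
  | 0 => dw_init M
  | m.+1 => dw_trans (dw_run M w m) (w m)
  end.

Definition dw_lang A (M : DWMA A) : language A :=
  fun w => exists2 S, S \in dw_acc M &
    forall q, q \in S <-> exists i, dw_run M w i = q.

Definition dw_size A (M : DWMA A) : nat := #|dw_state M| + #|dw_acc M|.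

Definition delay_fun (f : nat -> nat) : Prop := forall i, 0 < f i.
Definition constant_delay (f : nat -> nat) : Prop := forall i, 0 < i -> f i = 1.

Definition prefix A (a : word A) (n : nat) : seq A := map a (iota 0 n).
Definition slice A (a : word A) (m n : nat) : seq A := map a (iota m n).
(* total number of input letters picked by I in rounds 0..i-1 *)
Definition offs (f : nat -> nat) (i : nat) : nat := \sum_(j < i) f j.

(* A play of Gamma_f(L) is described by the input word a = u_0 u_1 ... (with
   |u_i| = f i, so u_i = slice a (offs f i) (f i)) and the output word b = v_0 v_1 ... *)
Definition consistent_I SI SO (f : nat -> nat) (tI : seq SO -> seq SI)
  (a : word SI) (b : word SO) : Prop :=
  forall i, tI (prefix b i) = slice a (offs f i) (f i).

Definition consistent_O SI SO (f : nat -> nat) (tO : seq SI -> SO)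
  (a : word SI) (b : word SO) : Prop :=
  forall i, b i = tO (prefix a (offs f i.+1)).

Definition outcome SI SO (a : word SI) (b : word SO) : word (SI * SO) :=
  fun k => (a k, b k).

Definition O_wins SI SO (f : nat -> nat) (L : language (SI * SO)) : Prop :=
  exists tO : seq SI -> SO,
    forall a b, consistent_O f tO a b -> L (outcome a b).

Definition I_wins SI SO (f : nat -> nat) (L : language (SI * SO)) : Prop :=
  exists tI : seq SO -> seq SI,
    (forall w, size (tI w) = f (size w)) /\
    forall a b, consistent_I f tI a b -> ~ L (outcome a b).

From Pilot Require Import Defs.
From mathcomp Require Import all_boot zify.
Set Implicit Arguments. Unset Strict Implicit. Unset Printing Implicit Defensive.

(* Player O names a value j with the first output letter and later marks one
   input position p; O wins iff a_p = j and the first later input letter that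
   is >= j equals j, i.e. p starts a return pair of the input word. Every window
   of 2^k letters over k values contains a return pair, so a lookahead of
   2^k + 1 letters lets O win. Conversely the ruler word p |-> v_2(p + 1) has no
   return pair at all and takes at most n + 1 values on [0, 2^n): if I first
   plays the ruler word and then, once j is known, only letters different
   from j, no marked position can be closed by a letter equal to j. *)

Definition return_pair (a : nat -> nat) (p q : nat) : Prop :=
  [/\ p < q, a p = a q & forall r, p < r < q -> a r < a p].

Definition return_pairb (a : nat -> nat) (p q : nat) : bool :=
  [&& p < q, a p == a q & all (fun r => a r < a p) (iota p.+1 (q - p.+1))].

Lemma return_pairP a p q : reflect (return_pair a p q) (return_pairb a p q).
Proof.
apply: (iffP and3P) => [[pq /eqP apq /allP between] | [pq apq between]].
  split=> // r /andP [pr rq]; apply: between; rewrite mem_iota; lia.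
split=> //; first exact/eqP.
by apply/allP => r; rewrite mem_iota => r_pq; apply: between; lia.
Qed.

Lemma eq_return_pairb a a' p q : (forall r, r <= q -> a r = a' r) ->
  return_pairb a p q = return_pairb a' p q.
Proof.
move=> eq_aa'; rewrite /return_pairb.
have [pq | //] := ltnP p q; rewrite !eq_aa' ?(ltnW pq) //=; congr (_ && _).
by apply: eq_in_all => r; rewrite mem_iota => r_pq; rewrite eq_aa' //; lia.
Qed.

Lemma return_pair_of_repeat (a : nat -> nat) p q : p < q -> a p = a q ->
  (forall r, p < r < q -> a r <= a p) -> exists q', return_pair a p q'.
Proof.
move=> pq apq below.
have hit : exists r, (p < r) && (a r == a p) by exists q; rewrite pq apq eqxx.
case: (ex_minnP hit) => q' /andP [pq' /eqP aq'] first_hit.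
exists q'; split=> // r /andP [pr rq'].
have r_le_q : r < q by have := first_hit q; rewrite pq apq eqxx => /(_ isT); lia.
rewrite ltn_neqAle below ?pr ?r_le_q // andbT; apply: contraTneq rq' => ar.
by rewrite -leqNgt first_hit // pr ar eqxx.
Qed.

Lemma window_hit_or_below (a : nat -> nat) s N k :
    (forall r, s <= r < s + N -> a r <= k) ->
  (exists2 r, s <= r < s + N & a r = k) \/ (forall r, s <= r < s + N -> a r < k).
Proof.
move=> le_k; case: (boolP [exists r : 'I_N, a (s + r) == k]).
  by case/existsP => r /eqP ar; left; exists (s + r) => //; have := ltn_ord r; lia.
move/existsPn => miss; right => r r_in; rewrite ltn_neqAle le_k // andbT.
have r_lt : r - s < N by lia.
by have := miss (Ordinal r_lt); rewrite /= subnKC //; case/andP: r_in.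
Qed.

(* The maximal value k either occurs in both halves of the window, and two of
   its occurrences frame a return pair, or it misses one half, which then has
   fewer values. *)
Lemma window_has_return_pair k (a : nat -> nat) s :
    (forall r, s <= r < s + 2 ^ k -> a r < k) ->
  exists p q, [/\ s <= p, q < s + 2 ^ k & return_pair a p q].
Proof.
elim: k s => [|k IH] s lt_k.
  by have := lt_k s; rewrite expn0 addn1 leqnn ltnSn => /(_ isT).
have dbl : 2 ^ k.+1 = 2 ^ k + 2 ^ k by rewrite expnS mul2n addnn.
have le_k r : s <= r < s + 2 ^ k + 2 ^ k -> a r <= k.
  by move=> r_in; rewrite -ltnS lt_k // dbl addnA.
have [[p p_in ap] | low1] : (exists2 p, s <= p < s + 2 ^ k & a p = k) \/
    (forall r, s <= r < s + 2 ^ k -> a r < k).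
  by apply: window_hit_or_below => r r_in; apply: le_k; lia.
- have [[q q_in aq] | low2] : (exists2 q, s + 2 ^ k <= q < s + 2 ^ k + 2 ^ k & a q = k) \/
      (forall r, s + 2 ^ k <= r < s + 2 ^ k + 2 ^ k -> a r < k).
    by apply: window_hit_or_below => r r_in; apply: le_k; lia.
  + have pq : p < q by lia.
    have [|q' ret] := return_pair_of_repeat pq (etrans ap (esym aq)).
      by move=> r r_pq; rewrite ap le_k //; lia.
    exists p, q'; split=> //; first lia.
    case: ret => pq' _ before; rewrite dbl addnA ltnNge; apply/negP => big.
    suff: a q < a p by rewrite aq ap ltnn.
    by apply: before; lia.
  + have [p' [q' [sp qs ret]]] := IH _ low2.
    by exists p', q'; split=> //; lia.
- have [p' [q' [sp qs ret]]] := IH _ low1.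
  by exists p', q'; split=> //; lia.
Qed.

Definition ruler (p : nat) : nat := logn 2 p.+1.

(* Write p.+1 = u * 2^t and q.+1 = v * 2^t with u < v odd: then u.+1 < v,
   and r.+1 = u.+1 * 2^t has a strictly larger 2-adic valuation. *)
Lemma ruler_no_return p q : ~ return_pair ruler p q.
Proof.
case=> pq; rewrite /ruler; set t := logn 2 p.+1 => eq_t below.
have [u odd_u def_p] := pfactor_coprime (isT : prime 2) (ltn0Sn p).
have [v odd_v def_q] := pfactor_coprime (isT : prime 2) (ltn0Sn q).
rewrite -/t in def_p; rewrite -eq_t in def_q.
rewrite coprime2n in odd_u; rewrite coprime2n in odd_v.
have pos_t : 0 < 2 ^ t by rewrite expn_gt0.
have uv : u < v by rewrite -(ltn_pmul2r pos_t) -def_p -def_q.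
have u1v : u.+1 < v.
  by rewrite ltn_neqAle uv andbT; apply: contraTneq odd_v => <-; rewrite /= odd_u.
have pos_r : 0 < u.+1 * 2 ^ t by rewrite muln_gt0.
have big_r : t < logn 2 (u.+1 * 2 ^ t).
  rewrite lognM // pfactorK // -[X in X < _]add0n ltn_add2r logn_gt0.
  by rewrite mem_primes /= dvdn2 /= odd_u.
have: u * 2 ^ t < u.+1 * 2 ^ t < v * 2 ^ t by rewrite !ltn_pmul2r ?ltnSn.
rewrite -def_p -def_q => r_in.
have := below (u.+1 * 2 ^ t).-1; rewrite prednK //; lia.
Qed.

Lemma ruler_le p n : p < 2 ^ n -> ruler p <= n.
Proof.
move=> p_lt; rewrite -(@leq_exp2l 2) //; apply: leq_trans p_lt.
by apply: dvdn_leq => //; apply: pfactor_dvdnn.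
Qed.

Lemma offs0 f : offs f 0 = 0.
Proof. by rewrite /offs big_ord0. Qed.

Lemma offsS f i : offs f i.+1 = offs f i + f i.
Proof. by rewrite /offs big_ord_recr. Qed.

Lemma offs_constant f i : constant_delay f -> offs f i.+1 = f 0 + i.
Proof.
move=> cf; elim: i => [|i IH]; first by rewrite offsS offs0 add0n addn0.
by rewrite offsS IH (cf i.+1) // addn1 addnS.
Qed.

Lemma offs_block f p : delay_fun f -> exists i, offs f i <= p < offs f i.+1.
Proof.
move=> df; elim: p => [|p [i /andP [lo hi]]].
  by exists 0; rewrite offsS offs0 df.
have [hi' | eq_p] := ltnP p.+1 (offs f i.+1); first by exists i; rewrite hi' andbT; lia.
by exists i.+1; rewrite [offs f i.+2]offsS; have := df i.+1; lia.
Qed.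

Lemma take_prefix A (a : word A) n i : take n (Defs.prefix a (n + i)) = Defs.prefix a n.
Proof. by rewrite /Defs.prefix iotaD map_cat take_size_cat // size_map size_iota. Qed.

Lemma nth_prefix A (x0 : A) (a : word A) n r : r < n -> nth x0 (Defs.prefix a n) r = a r.
Proof. by move=> rn; rewrite (nth_map 0) ?size_iota // nth_iota. Qed.

Lemma O_wins_lookahead SI SO f (L : language (SI * SO)) (plan : seq SI -> word SO) :
    constant_delay f ->
    (forall a b, (forall i, b i = plan (Defs.prefix a (f 0)) i) -> L (outcome a b)) ->
  O_wins f L.
Proof.
move=> cf win; exists (fun s => plan (take (f 0) s) (size s - f 0)) => a b cons_b.
apply: win => i; rewrite cons_b offs_constant // take_prefix.
by rewrite /Defs.prefix size_map size_iota addKn.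
Qed.

Lemma I_wins_two_phase SI SO g (L : language (SI * SO)) (u : word SI) (v : SO -> SI) :
    delay_fun g ->
    (forall a b, (forall p, a p = if p < g 0 then u p else v (b 0)) -> ~ L (outcome a b)) ->
  I_wins g L.
Proof.
move=> dg win.
pose tI (w : seq SO) := map (fun p => if w is b0 :: _ then v b0 else u p)
                            (iota (offs g (size w)) (g (size w))).
exists tI; split=> [w | a b cons_a]; first by rewrite size_map size_iota.
apply: win => p; have [i /andP [lo hi]] := offs_block p dg.
have := cons_a i; rewrite /tI /Defs.prefix size_map size_iota /slice => /eq_in_map.
move=> /(_ p); rewrite mem_iota lo -offsS hi => /(_ isT) <-.
case: i lo hi => [|i] lo hi /=; first by rewrite offsS offs0 add0n in hi; rewrite hi.
suff: g 0 <= p by rewrite leqNgt => /negbTE ->.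
by apply: leq_trans lo; rewrite /offs big_ord_recl leq_addr.
Qed.

Notation waiting j := (Some (inl (j, false))).
Notation armed j := (Some (inl (j, true))).
Notation verdict b := (Some (inr b)).

Section ReturnAutomaton.

Variable m : nat.

Definition rstate : finType := option (('I_m * bool) + bool).

Definition mark_step (j x : 'I_m) (mk : bool) : rstate :=
  if mk then (if x == j then armed j else verdict false) else waiting j.

Definition rstep (q : rstate) (l : 'I_m * ('I_m * bool)) : rstate :=
  match q with
  | None => waiting l.2.1
  | waiting j => mark_step j l.1 l.2.2
  | armed j => if l.1 < j then armed j else verdict (l.1 == j)
  | verdict b => verdict b
  end.

Definition return_automaton : DWMA ('I_m * ('I_m * bool)) :=
  MkDWMA (None : rstate) rstep
    [set [set None; waiting j; armed j; verdict true] | j : 'I_m].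

Lemma return_automaton_size : dw_size return_automaton <= 3 * m + 3.
Proof.
rewrite /dw_size /= card_option card_sum card_prod card_ord card_bool.
apply: leq_trans (leq_add (leqnn _) (leq_imset_card _ _)) _.
rewrite card_ord; lia.
Qed.

Lemma accepted_reaches_true w : dw_lang return_automaton w ->
  exists i, dw_run return_automaton w i = verdict true.
Proof.
case=> S /imsetP [j _ ->] visited; apply/visited.
by rewrite !inE eqxx !orbT.
Qed.

Lemma run_marked_return (a : word 'I_m) b p q :
    0 < p -> return_pair (val \o a) p q -> (forall i, b i = (a p, i == p)) ->
  forall i, dw_run return_automaton (outcome a b) i =
    if i == 0 then None else if i <= p then waiting (a p)
    else if i <= q then armed (a p) else verdict true.
Proof.
move=> p_gt0 [/= pq apq below] def_b; elim=> [//|i IH].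
rewrite /= IH /outcome def_b; case: i IH => [|i] _ /=; first by rewrite p_gt0.
case: (ltngtP i.+1 p) => [// | pi | ->] /=; last by rewrite eqxx pq.
have [iq | qi] := ltnP i q; last by rewrite ltnNge (leqW qi).
have [i1q | ] := ltnP i.+1 q; first by rewrite /= below ?pi.
rewrite leq_eqVlt ltnNge iq orbF => /eqP <-.
by rewrite /= -(val_inj apq) ltnn eqxx.
Qed.

Lemma marked_return_accepted (a : word 'I_m) b p q :
    0 < p -> return_pair (val \o a) p q -> (forall i, b i = (a p, i == p)) ->
  dw_lang return_automaton (outcome a b).
Proof.
move=> p_gt0 ret def_b; have run := run_marked_return p_gt0 ret def_b.
have [pq _ _] := ret.
exists [set None; waiting (a p); armed (a p); verdict true]; first exact: imset_f.
move=> x; split.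
  rewrite !inE => /orP [/orP [/orP [] | ] | ] /eqP ->.
  - by exists 0.
  - by exists 1; rewrite run p_gt0.
  - have [q_ne0 q_gtp] : (q == 0) = false /\ (q <= p) = false by lia.
    by exists q; rewrite run q_ne0 q_gtp leqnn.
  - have [q1_gtp q1_gtq] : (q.+1 <= p) = false /\ (q.+1 <= q) = false by lia.
    by exists q.+1; rewrite run q1_gtp q1_gtq.
case=> i <-; rewrite run.
by case: (i == 0); [|case: (i <= p); [|case: (i <= q)]]; rewrite !inE eqxx ?orbT.
Qed.

Lemma rejected_without_return (a : word 'I_m) b :
    (forall p q, 0 < p -> return_pair (val \o a) p q -> a p != (b 0).1) ->
  ~ dw_lang return_automaton (outcome a b).
Proof.
move=> no_ret; set j := (b 0).1.
pose R := dw_run return_automaton (outcome a b).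
have inv i : 0 < i -> [\/ R i = waiting j, R i = verdict false |
    R i = armed j /\ exists2 p, 0 < p < i & a p = j /\ forall r, p < r < i -> a r < j].
  elim: i => [//|i IH] _; case: i IH => [_ | i IH]; first by constructor 1.
  have -> : R i.+2 = rstep (R i.+1) (a i.+1, b i.+1) by [].
  case: (IH isT) => [-> | -> | [-> [p p_in [ap below]]]] /=; rewrite /mark_step.
  - case: (b i.+1).2; last by constructor 1.
    case: eqP => [ai | _]; last by constructor 2.
    by constructor 3; split=> //; exists i.+1; [lia | split=> // r; lia].
  - by constructor 2.
  - case: ltnP => [lt_j | ge_j].
      constructor 3; split=> //; exists p; first lia.
      split=> // r /andP [pr]; rewrite ltnS leq_eqVlt => /orP [/eqP -> // | ri].
      by apply: below; rewrite pr.
    case: eqP => [ai | _]; last by constructor 2.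
    have ret : return_pair (val \o a) p i.+1.
      split=> /=; [by case/andP: p_in | by rewrite ap ai |].
      by move=> r r_in; rewrite ap; exact: below.
    have p_gt0 : 0 < p by case/andP: p_in.
    by have := no_ret p i.+1 p_gt0 ret; rewrite ap eqxx.
case/accepted_reaches_true => i; rewrite -/R.
by case: i => [//|i]; case: (inv i.+1 isT) => [->|->|[-> _]].
Qed.

End ReturnAutomaton.

(* Position 0 cannot be marked, so the plan looks for a return pair in the
   window [1, 2^k.+1]. *)
Definition return_plan k (s : seq 'I_k.+1) : word ('I_k.+1 * bool) :=
  let a r := nth ord0 s r in
  if [pick pq : 'I_(2 ^ k.+1).+1 * 'I_(2 ^ k.+1).+1 |
        (0 < pq.1) && return_pairb (val \o a) pq.1 pq.2] is Some pq
  then fun i => (a pq.1, i == pq.1) else fun=> (ord0, false).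

Lemma return_planP k (a : word 'I_k.+1) : exists p q,
  [/\ 0 < p, return_pair (val \o a) p q &
      forall i, return_plan (Defs.prefix a (2 ^ k.+1).+1) i = (a p, i == p)].
Proof.
set N := (2 ^ k.+1).+1.
have prefixE r : r < N -> nth ord0 (Defs.prefix a N) r = a r by apply: nth_prefix.
rewrite /return_plan (eq_pick (Q := fun pq : 'I_N * 'I_N =>
    (0 < pq.1) && return_pairb (val \o a) pq.1 pq.2)); last first.
  move=> [p q] /=; congr (_ && _); apply: eq_return_pairb => r rq /=.
  by rewrite prefixE //; apply: leq_ltn_trans rq (ltn_ord q).
case: pickP => [[p q] /andP [/= p_gt0 /return_pairP ret] | none].
  by exists p, q; split=> // i; rewrite prefixE.
have [p [q [p_ge1 q_lt ret]]] :=
  @window_has_return_pair k.+1 (val \o a) 1 (fun r _ => ltn_ord (a r)).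
have [pN qN] : p < N /\ q < N by case: ret; rewrite /N; lia.
have := none (Ordinal pN, Ordinal qN).
by rewrite /= p_ge1; move/return_pairP: ret => ->.
Qed.

Definition other n (j : 'I_n.+1) : 'I_n.+1 := if j == ord0 then ord_max else ord0.

Lemma other_neq n (j : 'I_n.+1) : 0 < n -> other j != j.
Proof.
move=> n_gt0; rewrite /other; have [-> | ne] := eqVneq j ord0.
  by rewrite -val_eqE /= -lt0n.
by rewrite eq_sym.
Qed.

Lemma I_wins_ruler n g : 0 < n -> delay_fun g -> g 0 <= 2 ^ n ->
  I_wins g (dw_lang (return_automaton n.+1)).
Proof.
move=> n_gt0 dg g0_le.
apply: (I_wins_two_phase (u := fun p => inord (ruler p)) (v := fun o => other o.1))
  => // a b def_a.
apply: rejected_without_return => p q p_gt0 ret; apply/eqP => ap.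
have [pq apq _] := ret.
have aq : a q = (b 0).1 by rewrite -ap; apply/esym/val_inj.
have q_lt : q < g 0.
  rewrite ltnNge; apply: contraL (other_neq (b 0).1 n_gt0) => le_q.
  by rewrite negbK -{2}aq def_a ltnNge le_q.
have agree r : r <= q -> (val \o a) r = ruler r.
  move=> rq; rewrite /= def_a ifT; last lia.
  by rewrite inordK // ltnS ruler_le //; lia.
apply: (@ruler_no_return p q); apply/return_pairP.
by rewrite -(eq_return_pairb _ agree); apply/return_pairP.
Qed.

Theorem corollary1 :
  exists c : nat, forall n : nat, 0 < n ->
    exists (SI SO : finType) (M : DWMA (SI * SO)),
      dw_size M <= c * n /\
      (exists f, delay_fun f /\ constant_delay f /\ O_wins f (dw_lang M)) /\
      (forall g, delay_fun g -> g 0 <= 2 ^ n -> I_wins g (dw_lang M)).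
Proof.
exists 9 => n n_gt0.
exists 'I_n.+1, ('I_n.+1 * bool)%type, (return_automaton n.+1); split.
  by apply: leq_trans (return_automaton_size n.+1) _; lia.
split; last by move=> g; apply: I_wins_ruler.
pose f i := if i is 0 then (2 ^ n.+1).+1 else 1.
have cf : constant_delay f by case.
exists f; split; first by case.
split=> //; apply: (O_wins_lookahead (plan := @return_plan n)) => // a b def_b.
have [p [q [p_gt0 ret plan_p]]] := return_planP a.
by apply: (marked_return_accepted p_gt0 ret) => i; rewrite def_b plan_p.
Qed.
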